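(* Let $\phi$ be an LTL formula. Every tableau for $\phi$ constructed according to the rules, including the PRUNE rule, has no infinite branch. Consequently, any construction process of a tableau for $\phi$ terminates in a finished tableau, in which every leaf is ticked or crossed.
   Context: LTL formulas over a countable set $AP$ of atoms are built from atoms $p\in AP$ and the constant $\top$ using $\neg\alpha$, $\alpha\wedge\beta$, $X\alpha$ and $\alpha U\beta$. We write $\bot$ for $\neg\top$. A structure is a triple $(S,R,g)$ where $S$ is a finite set, $R\subseteq S\times S$ is serial (every state has an $R$-successor), and $g:S\to 2^{AP}$. A fullpath is a sequence $\sigma=\langle s_0,s_1,\dots\rangle$ with $(s_i,s_{i+1})\in R$ for all $i$. We write $\sigma_i=s_i$ and $\sigma_{\ge j}=\langle s_j,s_{j+1},\dots\rangle$. Truth is defined as follows: - $\sigma\models p$ iff $p\in g(\sigma_0)$; - $\sigma\models\top$ always; - $\neg$ and $\wedge$ are classical; - $\sigma\models X\alpha$ iff $\sigma_{\ge1}\models\alpha$; - $\sigma\models\alpha U\beta$ iff there is $i\ge0$ with $\sigma_{\ge i}\models\beta$ and $\sigma_{\ge j}\models\alpha$ for all $0\le j<i$. A formula is satisfiable iff it is true on some fullpath of some structure. Tableau. A tableau for $\phi$ is a finite rooted tree. Each node $u$ carries a finite set of formulas $\Gamma_u$ (its label), and the root is labelled $\{\phi\}$. We write $u<v$ when $u$ is a proper ancestor of $v$ and $u\le v$ when it is an ancestor or equal. A formula is elementary if it is an atom, a negated atom, or of the form $X\alpha$ or $\neg X\alpha$. A label is poised if it is nonempty, contains no pair $\alpha,\neg\alpha$,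 and all its formulas are elementary. An $X$-eventuality of a poised label is a member of the form $X(\alpha U\beta)$. Static rules are written ''parent label / children'', where $\{\chi\}\mathbin{\dot\cup}\Delta$ means $\chi\notin\Delta$: - EMPTY: $\{\}$ / tick. - CONTRADICTION: $\{\alpha,\neg\alpha\}\mathbin{\dot\cup}\Delta$ / cross. - $\neg\top$: $\{\neg\top\}\mathbin{\dot\cup}\Delta$ / cross. - $\top$: $\{\top\}\mathbin{\dot\cup}\Delta$ / $\Delta$. - $\wedge$: $\{\alpha\wedge\beta\}\mathbin{\dot\cup}\Delta$ / $\Delta\cup\{\alpha,\beta\}$. - $U$: $\{\alpha U\beta\}\mathbin{\dot\cup}\Delta$ / two children $\Delta\cup\{\beta\}$ and $\Delta\cup\{\alpha,X(\alpha U\beta)\}$. - $\neg\neg$: $\{\neg\neg\alpha\}\mathbin{\dot\cup}\Delta$ / $\Delta\cup\{\alpha\}$. - $\neg\wedge$: $\{\neg(\alpha\wedge\beta)\}\mathbin{\dot\cup}\Delta$ / two children $\Delta\cup\{\neg\alpha\}$ and $\Delta\cup\{\neg\beta\}$. - $\neg U$: $\{\neg(\alpha U\beta)\}\mathbin{\dot\cup}\Delta$ / two children $\Delta\cup\{\neg\alpha,\neg\beta\}$ and $\Delta\cup\{\neg\beta,X\neg(\alpha U\beta)\}$. Non-static rules apply only to a leaf $v$ with poised label. The first applicable one in the following list is used. - LOOP: if some $u<v$ has poised $\Gamma_u\supseteq\Gamma_v$, and for every $X(\alpha U\beta)\in\Gamma_u$ there is $w$ with $u<w\le v$ and $\beta\in\Gamma_w$,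 then $v$ is ticked. - PRUNE: if $u<v'<v$ all have the same poised label $\Gamma$, and for every $X(\alpha U\beta)\in\Gamma$, whenever some $x$ with $v'<x\le v$ has $\beta\in\Gamma_x$ there is $y$ with $u<y\le v'$ and $\beta\in\Gamma_y$, then $v$ is crossed. - PRUNE$_0$: if $u<v$ share the same poised label $\Gamma$, $\Gamma$ contains at least one $X$-eventuality, and for no $X(\alpha U\beta)\in\Gamma$ is there $x$ with $u<x\le v$ and $\beta\in\Gamma_x$, then $v$ is crossed. - TRANSITION: otherwise $v$ gets one child labelled $\{\alpha: X\alpha\in\Gamma_v\}\cup\{\neg\alpha:\neg X\alpha\in\Gamma_v\}$. A tableau is constructed from the root by repeatedly choosing any leaf that is neither ticked nor crossed and applying an applicable rule. For non-poised labels this means any applicable static rule to any suitable pivot formula. A tableau is finished if every leaf is ticked or crossed, and successful if some leaf is ticked. *)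

From Stdlib Require Import List Arith.
Import ListNotations.

Inductive form : Type :=
| Atom  : nat -> form
| Top   : form
| Neg   : form -> form
| And   : form -> form -> form
| Next  : form -> form
| Until : form -> form -> form.

(* A label is a finite set of formulas, represented by a list;
   only membership matters (labels are compared as sets). *)
Definition label := list form.

Definition seteq (G H : label) : Prop := forall x, In x G <-> In x H.

Definition elementary (f : form) : Prop :=
  match f with
  | Atom _ | Neg (Atom _) | Next _ | Neg (Next _) => True
  | _ => False
  end.

Definition poised (G : label) : Prop :=
  G <> [] /\
  (forall a, In a G -> ~ In (Neg a) G) /\
  (forall a, In a G -> elementary a).

(* Static rules producing children: for pivot chi, the list of children,
   each given by the list of formulas added to Delta = G \ {chi}.
   EMPTY, CONTRADICTION and neg-top produce a tick/cross (no child). *)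
Definition rule_children (chi : form) : list (list form) :=
  match chi with
  | Top => [ [] ]
  | And a b => [ [a; b] ]
  | Until a b => [ [b]; [a; Next (Until a b)] ]
  | Neg (Neg a) => [ [a] ]
  | Neg (And a b) => [ [Neg a]; [Neg b] ]
  | Neg (Until a b) => [ [Neg a; Neg b]; [Neg b; Next (Neg (Until a b))] ]
  | _ => []
  end.

Definition static_child (G H : label) : Prop :=
  exists chi adds, In chi G /\ In adds (rule_children chi) /\
    forall x, In x H <-> ((In x G /\ x <> chi) \/ In x adds).

(* Non-static rules at leaf index n of a branch g (g 0 = root, g i is the
   label of the i-th node on the branch; u < v means index u < index v). *)
Definition loop_app (g : nat -> label) (n : nat) : Prop :=
  exists u, u < n /\ poised (g u) /\ (forall x, In x (g n) -> In x (g u)) /\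
    forall a b, In (Next (Until a b)) (g u) ->
      exists w, u < w <= n /\ In b (g w).

Definition prune_app (g : nat -> label) (n : nat) : Prop :=
  exists u v', u < v' < n /\ poised (g n) /\
    seteq (g u) (g n) /\ seteq (g v') (g n) /\
    forall a b, In (Next (Until a b)) (g n) ->
      (exists x, v' < x <= n /\ In b (g x)) ->
      exists y, u < y <= v' /\ In b (g y).

Definition prune0_app (g : nat -> label) (n : nat) : Prop :=
  exists u, u < n /\ poised (g n) /\ seteq (g u) (g n) /\
    (exists a b, In (Next (Until a b)) (g n)) /\
    forall a b, In (Next (Until a b)) (g n) ->
      ~ (exists x, u < x <= n /\ In b (g x)).

Definition transition (G H : label) : Prop :=
  forall x, In x H <->
    (In (Next x) G \/ exists a, x = Neg a /\ In (Neg (Next a)) G).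

Definition tab_step (g : nat -> label) (n : nat) : Prop :=
  (~ poised (g n) /\ static_child (g n) (g (S n))) \/
  (poised (g n) /\ ~ loop_app g n /\ ~ prune_app g n /\ ~ prune0_app g n /\
   transition (g n) (g (S n))).

Definition is_root (phi : form) (g : nat -> label) : Prop := seteq (g 0) [phi].

(* Labels on a branch are subsets of the finite closure of phi. Static rules
   strictly lower the total weight of a label, so runs of non-poised nodes are
   short. Among the poised nodes, fix a label Gamma and its first occurrence u.
   At a later copy t, LOOP and PRUNE_0 fail only if some eventuality of Gamma is
   fulfilled in (u, t]; PRUNE fails at t for an intermediate copy v only if some
   eventuality fulfilled in (v, t] was not fulfilled in (u, v]. So the number of
   eventualities fulfilled since u strictly grows from copy to copy, and Gamma
   labels at most 1 + |closure| poised nodes. This bounds every branch by a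
   constant depending only on phi. *)

From Stdlib Require Import List Arith Lia Classical ClassicalEpsilon Wf_nat.
Import ListNotations.

Lemma list_sum_map_le {A} (f h : A -> nat) l :
  (forall x, In x l -> f x <= h x) -> list_sum (map f l) <= list_sum (map h l).
Proof.
  induction l as [|a l IH]; simpl; intros H; [lia|].
  specialize (H a (or_introl eq_refl)) as Ha.
  specialize (IH (fun x Hx => H x (or_intror Hx))); lia.
Qed.

Lemma list_sum_map_add {A} (f h : A -> nat) l :
  list_sum (map (fun x => f x + h x) l) = list_sum (map f l) + list_sum (map h l).
Proof. induction l as [|a l IH]; simpl; lia. Qed.

Definition truth (P : Prop) : bool := if excluded_middle_informative P then true else false.

Lemma truth_spec P : truth P = true <-> P.
Proof. unfold truth; destruct excluded_middle_informative; split; congruence || tauto. Qed.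

Lemma truth_false P : ~ P -> truth P = false.
Proof. unfold truth; destruct excluded_middle_informative; tauto. Qed.

Definition count_below (P : nat -> Prop) (n : nat) : nat :=
  length (filter (fun j => truth (P j)) (seq 0 n)).

Lemma count_below_S P n :
  count_below P (S n) = count_below P n + (if truth (P n) then 1 else 0).
Proof.
  unfold count_below; rewrite seq_S, filter_app, length_app; simpl.
  destruct (truth (P n)); reflexivity.
Qed.

Lemma count_below_le_of_injective {B} (P : nat -> Prop) (f : nat -> B) (L : list B) n :
  (forall i j, i < n -> j < n -> P i -> P j -> f i = f j -> i = j) ->
  (forall i, i < n -> P i -> In (f i) L) ->
  count_below P n <= length L.
Proof.
  intros Hinj Hrange; unfold count_below.
  rewrite <- (length_map f); apply NoDup_incl_length.
  - apply NoDup_map_NoDup_ForallPairs; [|apply NoDup_filter, seq_NoDup].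
    intros i j Hi Hj Hfij; apply filter_In in Hi as [Hi HPi], Hj as [Hj HPj].
    apply in_seq in Hi, Hj; rewrite truth_spec in HPi, HPj; apply Hinj; auto; lia.
  - intros y Hy; apply in_map_iff in Hy as [i [<- Hi]].
    apply filter_In in Hi as [Hi HPi]; apply in_seq in Hi; rewrite truth_spec in HPi.
    apply Hrange; auto; lia.
Qed.

Lemma least_witness_function {A} (P : A -> nat -> Prop) :
  exists f : A -> nat, forall a j, P a j -> P a (f a) /\ f a <= j.
Proof.
  apply (choice (fun a m => forall j, P a j -> P a m /\ m <= j)); intros a.
  destruct (classic (exists j, P a j)) as [Hex | Hnone].
  - destruct (dec_inh_nat_subset_has_unique_least_element (P a) (fun j => classic (P a j)) Hex)
      as [m [[Hm Hleast] _]].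
    exists m; intros j Hj; auto.
  - exists 0; intros j Hj; exfalso; eauto.
Qed.

Lemma length_lt_of_strict_incl {A} (l l' : list A) b :
  NoDup l -> incl l l' -> In b l' -> ~ In b l -> length l < length l'.
Proof.
  intros Hl Hincl Hb Hnb.
  apply (NoDup_incl_length (l := b :: l)); [constructor; auto|].
  intros x [<- | Hx]; auto.
Qed.

Fixpoint sublists {A} (l : list A) : list (list A) :=
  match l with
  | [] => [[]]
  | x :: l => map (cons x) (sublists l) ++ sublists l
  end.

Lemma filter_in_sublists {A} (f : A -> bool) l : In (filter f l) (sublists l).
Proof.
  induction l as [|x l IH]; simpl; [auto|].
  apply in_or_app; destruct (f x); [left; apply in_map | right]; exact IH.
Qed.


Lemma form_eq_dec (x y : form) : {x = y} + {x <> y}.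
Proof. decide equality; apply Nat.eq_dec. Qed.

Fixpoint subformulas (f : form) : list form :=
  f :: match f with
       | Atom _ | Top => []
       | Neg a | Next a => subformulas a
       | And a b | Until a b => subformulas a ++ subformulas b
       end.

Lemma subformulas_refl f : In f (subformulas f).
Proof. destruct f; left; reflexivity. Qed.

Lemma subformulas_trans x y z :
  In y (subformulas x) -> In z (subformulas y) -> In z (subformulas x).
Proof.
  induction x; simpl; intros [<- | Hy] Hz; auto; try contradiction; right;
    try (apply in_app_or in Hy; apply in_or_app; destruct Hy); eauto.
Qed.

Lemma subformulas_neg phi a : In (Neg a) (subformulas phi) -> In a (subformulas phi).
Proof. intros H; apply (subformulas_trans _ _ _ H); right; apply subformulas_refl. Qed.
Lemma subformulas_next phi a : In (Next a) (subformulas phi) -> In a (subformulas phi).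
Proof. intros H; apply (subformulas_trans _ _ _ H); right; apply subformulas_refl. Qed.
Lemma subformulas_and_l phi a b : In (And a b) (subformulas phi) -> In a (subformulas phi).
Proof. intros H; apply (subformulas_trans _ _ _ H); right; apply in_or_app; left; apply subformulas_refl. Qed.
Lemma subformulas_and_r phi a b : In (And a b) (subformulas phi) -> In b (subformulas phi).
Proof. intros H; apply (subformulas_trans _ _ _ H); right; apply in_or_app; right; apply subformulas_refl. Qed.
Lemma subformulas_until_l phi a b : In (Until a b) (subformulas phi) -> In a (subformulas phi).
Proof. intros H; apply (subformulas_trans _ _ _ H); right; apply in_or_app; left; apply subformulas_refl. Qed.
Lemma subformulas_until_r phi a b : In (Until a b) (subformulas phi) -> In b (subformulas phi).
Proof. intros H; apply (subformulas_trans _ _ _ H); right; apply in_or_app; right; apply subformulas_refl. Qed.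

#[local] Hint Resolve subformulas_neg subformulas_next subformulas_and_l subformulas_and_r
  subformulas_until_l subformulas_until_r : closure.

Definition variants (x : form) : list form := [x; Neg x; Next x; Neg (Next x); Next (Neg x)].

Definition closure (phi : form) : list form :=
  nodup form_eq_dec (flat_map variants (subformulas phi)).

Lemma in_closure phi y :
  In y (closure phi) <-> exists x, In x (subformulas phi) /\ In y (variants x).
Proof. unfold closure; rewrite nodup_In, in_flat_map; reflexivity. Qed.

Lemma NoDup_closure phi : NoDup (closure phi).
Proof. apply NoDup_nodup. Qed.

Section ClosureIntro.
Variables (phi x : form).
Hypothesis Hx : In x (subformulas phi).
Lemma closure_sub : In x (closure phi).
Proof. apply in_closure; exists x; split; simpl; tauto. Qed.
Lemma closure_neg : In (Neg x) (closure phi).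
Proof. apply in_closure; exists x; split; simpl; tauto. Qed.
Lemma closure_next : In (Next x) (closure phi).
Proof. apply in_closure; exists x; split; simpl; tauto. Qed.
Lemma closure_neg_next : In (Neg (Next x)) (closure phi).
Proof. apply in_closure; exists x; split; simpl; tauto. Qed.
Lemma closure_next_neg : In (Next (Neg x)) (closure phi).
Proof. apply in_closure; exists x; split; simpl; tauto. Qed.
End ClosureIntro.

#[local] Hint Resolve closure_sub closure_neg closure_next closure_neg_next closure_next_neg : closure.

Ltac destruct_ors H := repeat match type of H with _ \/ _ => destruct H as [H | H] end.

Lemma static_child_closure phi G H :
  incl G (closure phi) -> static_child G H -> incl H (closure phi).
Proof.
  intros HG [chi [adds [Hchi [Hadds HH]]]] y Hy.
  apply HH in Hy as [[Hy _] | Hy]; auto.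
  apply HG, in_closure in Hchi as [x [Hx Hvar]].
  destruct chi as [m| |c|c1 c2|c|c1 c2]; try destruct c as [m| |c|c1 c2|c|c1 c2];
    simpl in Hadds; destruct_ors Hadds; try contradiction; subst adds;
    simpl in Hy; destruct_ors Hy; try contradiction; subst y;
    simpl in Hvar; destruct_ors Hvar; try contradiction; try discriminate;
    try injection Hvar as Hvar; subst; eauto 6 with closure.
Qed.

Lemma transition_closure phi G H :
  incl G (closure phi) -> transition G H -> incl H (closure phi).
Proof.
  intros HG Ht y Hy.
  apply Ht in Hy as [Hy | [a [-> Hy]]]; apply HG, in_closure in Hy as [x [Hx Hvar]];
    simpl in Hvar; destruct_ors Hvar; try contradiction; try discriminate;
    try injection Hvar as Hvar; subst; eauto 6 with closure.
Qed.

Lemma branch_in_closure phi g n :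
  is_root phi g -> (forall i, i < n -> tab_step g i) ->
  forall i, i <= n -> incl (g i) (closure phi).
Proof.
  intros Hroot Hsteps i; induction i as [|i IH]; intros Hi.
  - intros x Hx; apply Hroot in Hx as [<- | []].
    apply closure_sub, subformulas_refl.
  - destruct (Hsteps i) as [[_ Hstatic] | [_ [_ [_ [_ Htrans]]]]]; [lia | |].
    + apply (static_child_closure phi (g i)); auto with arith.
    + apply (transition_closure phi (g i)); auto with arith.
Qed.

(* [weight f] and [neg_weight f] bound the number of static rule applications
   that [f] and [Neg f] can still trigger. *)
Fixpoint weight (f : form) : nat :=
  match f with
  | Atom _ | Next _ => 0
  | Top => 1
  | Neg a => neg_weight a
  | And a b | Until a b => 1 + weight a + weight b
  end
with neg_weight (f : form) : nat :=
  match f with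
  | Atom _ | Next _ => 0
  | Top => 1
  | Neg a => 1 + weight a
  | And a b | Until a b => 1 + neg_weight a + neg_weight b
  end.

Lemma rule_children_weight chi adds :
  In adds (rule_children chi) -> list_sum (map weight adds) < weight chi.
Proof.
  intros Hadds.
  destruct chi as [m| |c|c1 c2|c|c1 c2]; try destruct c as [m| |c|c1 c2|c|c1 c2];
    simpl in Hadds; destruct_ors Hadds; try contradiction; subst adds; simpl; lia.
Qed.

Definition weight_in (G : label) (x : form) : nat :=
  if in_dec form_eq_dec x G then weight x else 0.

(* Counting over a duplicate-free [C] containing [G] weighs each member of [G]
   once, however often it is repeated in the list [G]. *)
Definition label_weight (C : list form) (G : label) : nat :=
  list_sum (map (weight_in G) C).

Lemma label_weight_le_total C G : label_weight C G <= list_sum (map weight C).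
Proof.
  apply list_sum_map_le; intros x _; unfold weight_in; destruct in_dec; lia.
Qed.

Lemma label_weight_singleton_ge C x : In x C -> weight x <= label_weight C [x].
Proof.
  unfold label_weight; induction C as [|y C IH]; simpl; intros Hx; [contradiction|].
  destruct Hx as [-> | Hx].
  - unfold weight_in at 1; destruct in_dec as [_ | []]; [lia | left; reflexivity].
  - specialize (IH Hx); lia.
Qed.

Lemma label_weight_disjoint C A : (forall x, In x A -> ~ In x C) -> label_weight C A = 0.
Proof.
  unfold label_weight; induction C as [|y C IH]; simpl; intros HA; [reflexivity|].
  unfold weight_in at 1; destruct in_dec as [Hy | _]; [exfalso; firstorder|].
  rewrite IH; firstorder.
Qed.

Lemma label_weight_singleton_le C x : NoDup C -> label_weight C [x] <= weight x.
Proof.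
  induction 1 as [|y C Hy HC IH]; [apply Nat.le_0_l|].
  unfold label_weight; simpl; unfold weight_in at 1.
  destruct in_dec as [[-> | []] | _]; [|exact IH].
  enough (label_weight C [y] = 0) by (unfold label_weight in *; lia).
  apply label_weight_disjoint; intros z [<- | []]; exact Hy.
Qed.

Lemma label_weight_le_sum C A : NoDup C -> label_weight C A <= list_sum (map weight A).
Proof.
  intros HC; induction A as [|a A IH]; simpl.
  - rewrite label_weight_disjoint; [lia | simpl; tauto].
  - pose proof (label_weight_singleton_le C a HC).
    enough (label_weight C (a :: A) <= label_weight C [a] + label_weight C A) by lia.
    unfold label_weight; rewrite <- list_sum_map_add; apply list_sum_map_le.
    intros x _; unfold weight_in; repeat destruct in_dec; simpl in *; tauto || lia.
Qed.

Lemma static_child_weight C G H :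
  NoDup C -> incl G C -> static_child G H -> label_weight C H < label_weight C G.
Proof.
  intros HC HG [chi [adds [Hchi [Hadds HH]]]].
  assert (Hpointwise : forall x,
    weight_in H x + weight_in [chi] x <= weight_in G x + weight_in adds x).
  { intros x; specialize (HH x); unfold weight_in;
      repeat destruct in_dec; simpl in *; try lia; exfalso; intuition congruence. }
  pose proof (list_sum_map_le _ _ C (fun x _ => Hpointwise x)) as Hsum.
  rewrite !list_sum_map_add in Hsum; fold (label_weight C H) (label_weight C [chi])
    (label_weight C G) (label_weight C adds) in Hsum.
  pose proof (label_weight_singleton_ge C chi (HG chi Hchi)).
  pose proof (label_weight_le_sum C adds HC).
  pose proof (rule_children_weight chi adds Hadds).
  lia.
Qed.

(* A canonical representative of the set [G], for [G] included in [C]. *)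
Definition restrict (C : list form) (G : label) : list form :=
  filter (fun x => if in_dec form_eq_dec x G then true else false) C.

Lemma restrict_seteq C G H :
  incl G C -> incl H C -> restrict C G = restrict C H -> seteq G H.
Proof.
  assert (Hmem : forall G x, incl G C -> In x G <-> In x (restrict C G)).
  { intros G' x HG'; unfold restrict; rewrite filter_In.
    specialize (HG' x); destruct in_dec; intuition congruence. }
  intros HG HH E x; rewrite (Hmem G x HG), (Hmem H x HH), E; reflexivity.
Qed.

Lemma tab_step_poised g t :
  tab_step g t -> poised (g t) -> ~ loop_app g t /\ ~ prune_app g t /\ ~ prune0_app g t.
Proof. intros [[Hnp _] | [_ [Hl [Hp [Hp0 _]]]]] Hpoised; tauto. Qed.

Definition fulfilled (C : list form) (g : nat -> label) (u t : nat) : list form :=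
  filter (fun b => truth ((exists a, In (Next (Until a b)) (g u)) /\
                          exists w, u < w <= t /\ In b (g w))) C.

Section Eventualities.
Variables (g : nat -> label) (u t : nat).
Hypotheses (Hut : u < t) (Hu : poised (g u)) (Ht : poised (g t)) (Hsame : seteq (g u) (g t)).

(* LOOP fails at [t] only because some eventuality of [g u] is pending, and
   then PRUNE_0 fails only because one of them is fulfilled. *)
Lemma fulfilled_since_copy :
  ~ loop_app g t -> ~ prune0_app g t ->
  exists a b w, In (Next (Until a b)) (g u) /\ u < w <= t /\ In b (g w).
Proof.
  intros Hloop Hprune0.
  assert (Hev : exists a b, In (Next (Until a b)) (g u)).
  { apply NNPP; intros Hnone; apply Hloop.
    exists u; split; [exact Hut|]; split; [exact Hu|]; split; [intros x; apply Hsame|].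
    intros a b Hab; exfalso; eauto. }
  apply NNPP; intros Hnone; apply Hprune0.
  exists u; split; [exact Hut|]; split; [exact Ht|]; split; [exact Hsame|]; split.
  - destruct Hev as [a [b Hab]]; exists a, b; apply Hsame, Hab.
  - intros a b Hab [w Hw]; apply Hnone; exists a, b, w; split; [apply Hsame|]; tauto.
Qed.

Lemma fulfilled_since_last_copy v :
  u < v < t -> seteq (g v) (g t) -> ~ prune_app g t ->
  exists a b w, In (Next (Until a b)) (g u) /\ v < w <= t /\ In b (g w) /\
    ~ (exists y, u < y <= v /\ In b (g y)).
Proof.
  intros Hv Hsame_v Hprune.
  apply NNPP; intros Hnone; apply Hprune.
  exists u, v; split; [lia|]; split; [exact Ht|]; split; [exact Hsame|]; split; [exact Hsame_v|].
  intros a b Hab [w Hw]; apply NNPP; intros Hy; apply Hnone.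
  exists a, b, w; split; [apply Hsame, Hab | tauto].
Qed.

Lemma fulfilled_length_lt C v :
  NoDup C -> (forall w, w <= t -> incl (g w) C) ->
  u <= v < t -> seteq (g v) (g t) ->
  ~ loop_app g t -> ~ prune_app g t -> ~ prune0_app g t ->
  length (fulfilled C g u v) < length (fulfilled C g u t).
Proof.
  intros HC Hincl Hv Hsame_v Hloop Hprune Hprune0.
  assert (Hfresh : exists b, In b (fulfilled C g u t) /\ ~ In b (fulfilled C g u v)).
  { unfold fulfilled; setoid_rewrite filter_In; setoid_rewrite truth_spec.
    destruct (Nat.eq_dec u v) as [<- | Hne].
    - destruct (fulfilled_since_copy Hloop Hprune0) as [a [b [w [Hab [Hw Hb]]]]].
      exists b; split; [split; [apply (Hincl w); auto; lia | eauto] |].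
      intros [_ [_ [y [Hy _]]]]; lia.
    - destruct (fulfilled_since_last_copy v ltac:(lia) Hsame_v Hprune)
        as [a [b [w [Hab [Hw [Hb Hold]]]]]].
      exists b; split; [split; [apply (Hincl w); auto; lia | split; eauto; exists w; split; auto; lia] |].
      intros [_ [_ Hy]]; auto. }
  destruct Hfresh as [b [Hb Hnb]].
  apply (length_lt_of_strict_incl _ _ b); auto; [apply NoDup_filter, HC |].
  unfold fulfilled; intros x; rewrite !filter_In, !truth_spec.
  intros [Hx [Hax [w Hw]]]; repeat split; auto; exists w; split; [lia | tauto].
Qed.
End Eventualities.

Definition closure_weight (phi : form) : nat := list_sum (map weight (closure phi)).

Definition branch_bound (phi : form) : nat :=
  length (sublists (closure phi)) * S (length (closure phi)) * S (closure_weight phi)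
  + closure_weight phi.

Section Branch.
Variables (phi : form) (g : nat -> label) (n : nat).
Hypotheses (Hroot : is_root phi g) (Hsteps : forall i, i < n -> tab_step g i).

Let Hincl : forall i, i <= n -> incl (g i) (closure phi) :=
  branch_in_closure phi g n Hroot Hsteps.

Lemma same_class_fulfilled_lt u v t :
  u <= v < t -> t < n -> poised (g u) -> poised (g t) ->
  restrict (closure phi) (g u) = restrict (closure phi) (g t) ->
  restrict (closure phi) (g v) = restrict (closure phi) (g t) ->
  length (fulfilled (closure phi) g u v) < length (fulfilled (closure phi) g u t).
Proof.
  intros Hv Htn Hu Ht Hclass_u Hclass_v.
  destruct (tab_step_poised g t (Hsteps t Htn) Ht) as [Hloop [Hprune Hprune0]].
  apply fulfilled_length_lt; auto; [lia | | apply NoDup_closure | | ].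
  - apply restrict_seteq in Hclass_u; auto; apply Hincl; lia.
  - intros w Hw; apply Hincl; lia.
  - apply restrict_seteq in Hclass_v; auto; apply Hincl; lia.
Qed.

(* A poised node is determined by its label and by how many eventualities
   have been fulfilled since the first node carrying that label. *)
Lemma poised_count_le :
  count_below (fun j => poised (g j)) n <=
  length (sublists (closure phi)) * S (length (closure phi)).
Proof.
  destruct (least_witness_function
              (fun S j => j < n /\ poised (g j) /\ restrict (closure phi) (g j) = S))
    as [first Hfirst].
  rewrite <- (length_seq (S (length (closure phi))) 0), <- length_prod.
  apply (count_below_le_of_injective _
           (fun j => (restrict (closure phi) (g j),
                      length (fulfilled (closure phi) g (first (restrict (closure phi) (g j))) j)))).
  - intros i j Hi Hj Hpi Hpj Hkey; injection Hkey as Hclass Hlen.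
    rewrite <- Hclass in Hlen.
    destruct (Hfirst (restrict (closure phi) (g i)) i) as [[Hfn [Hfp Hfc]] Hfi]; [auto|].
    destruct (Hfirst (restrict (closure phi) (g i)) j) as [_ Hfj]; [auto|].
    destruct (Nat.lt_trichotomy i j) as [Hij | [-> | Hji]]; [exfalso | reflexivity | exfalso].
    + pose proof (same_class_fulfilled_lt (first (restrict (closure phi) (g i))) i j
        ltac:(lia) Hj Hfp Hpj (eq_trans Hfc Hclass) Hclass); lia.
    + pose proof (same_class_fulfilled_lt (first (restrict (closure phi) (g i))) j i
        ltac:(lia) Hi Hfp Hpi Hfc (eq_sym Hclass)); lia.
  - intros i Hi Hpi; apply in_prod; [apply filter_in_sublists|].
    apply in_seq; split; [lia | apply Nat.lt_succ_r, filter_length_le].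
Qed.

(* Every static step lowers the label weight, and a poised node resets it to
   at most [closure_weight phi]. *)
Lemma branch_potential i :
  i <= n ->
  i <= count_below (fun j => poised (g j)) i * S (closure_weight phi)
       + (closure_weight phi - label_weight (closure phi) (g i)).
Proof.
  induction i as [|i IH]; intros Hi; [lia|].
  specialize (IH ltac:(lia)); rewrite count_below_S.
  pose proof (label_weight_le_total (closure phi) (g i)).
  pose proof (label_weight_le_total (closure phi) (g (S i))).
  fold (closure_weight phi) in *.
  destruct (Hsteps i) as [[Hnp Hstatic] | [Hp _]]; [lia | |].
  - pose proof (static_child_weight _ _ _ (NoDup_closure phi) (Hincl i ltac:(lia)) Hstatic).
    rewrite truth_false by exact Hnp; lia.
  - rewrite (proj2 (truth_spec _) Hp); nia.
Qed.

Lemma branch_length_le : n <= branch_bound phi.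
Proof.
  pose proof (branch_potential n (le_n n)).
  pose proof poised_count_le.
  unfold branch_bound; nia.
Qed.
End Branch.

Theorem mainTheorem3 (phi : form) :
  (~ exists g : nat -> label, is_root phi g /\ forall n, tab_step g n) /\
  (exists N : nat, forall (g : nat -> label) (n : nat),
      is_root phi g -> (forall i, i < n -> tab_step g i) -> n <= N).
Proof.
  split.
  - intros [g [Hroot Hsteps]].
    pose proof (branch_length_le phi g (S (branch_bound phi)) Hroot (fun i _ => Hsteps i)).
    lia.
  - exists (branch_bound phi); intros g n Hroot Hsteps.
    exact (branch_length_le phi g n Hroot Hsteps).
Qed.
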